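(* Let $G$ be a simple directed graph on $[n]$ and $\sigma\subseteq[n]$, and suppose either $\sigma$ is a directed clique of $G$, or $\sigma$ contains a clique of $G$ of size $|\sigma|-1$. Then $\sigma$ is a stable motif (for a CTLN $W(G,\varepsilon,\delta)$ with legal parameters) if and only if $\sigma$ is a clique.
   Context: Let $G$ be a simple directed graph on $[n]=\{1,\dots,n\}$. Legal range: $\delta>0$, $0<\varepsilon<\frac{\delta}{\delta+1}$. The CTLN $W=W(G,\varepsilon,\delta)$ is the $n\times n$ matrix with $W_{ii}=0$, $W_{ij}=-1+\varepsilon$ if $j\to i$, $W_{ij}=-1-\delta$ if $i\neq j$ and $j\not\to i$; dynamics $\dot x_i=-x_i+[\sum_jW_{ij}x_j+\theta]_+$, $\theta>0$. CTLNs are assumed nondegenerate ($\det(I-W_\sigma)\ne0$ and all Cramer determinants for $(I-W_\sigma)x=\theta1_\sigma$ nonzero). $W_\sigma$ is the principal submatrix indexed by $\sigma$. $\sigma$ is a permitted motif if $\theta(I-W_\sigma)^{-1}1_\sigma$ has all entries positive; it is a stable motif if permitted and all eigenvalues of $I-W_\sigma$ have positive real part. A clique is a set of nodes pairwise bidirectionally connected. $\sigma$ is a directed clique if its nodes can be ordered $1,\dots,|\sigma|$ so that $i\to j$ in $G|_\sigma$ whenever $i<j$ (no constraint on edges $j\to i$ for $i<j$). *)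

From HB Require Import structures.
From mathcomp Require Import all_boot all_order all_algebra.
From mathcomp Require Import complex.
From mathcomp Require Import reals.
Set Implicit Arguments. Unset Strict Implicit. Unset Printing Implicit Defensive.
Import Order.TTheory GRing.Theory Num.Theory.
Local Open Scope ring_scope.

(* A simple directed graph on [n] = 'I_n : edge relation G, with G j i meaning
   j -> i; simple = no self-loops. *)
Definition simple_digraph (n : nat) (G : rel 'I_n) : Prop :=
  forall i, ~~ G i i.

Definition legal_params (R : realType) (eps delta : R) : Prop :=
  0 < delta /\ 0 < eps /\ eps < delta / (delta + 1).

Definition ctln (R : realType) (n : nat) (G : rel 'I_n) (eps delta : R)
  : 'M[R]_n :=
  \matrix_(i, j) (if i == j then 0
                  else if G j i then -1 + eps else -1 - delta).

Definition princ (R : realType) (n : nat) (W : 'M[R]_n) (s : {set 'I_n})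
  : 'M[R]_#|s| :=
  \matrix_(a, b) W (enum_val a) (enum_val b).

Definition IW (R : realType) (n : nat) (W : 'M[R]_n) (s : {set 'I_n})
  : 'M[R]_#|s| := 1%:M - princ W s.

Definition cramer_mx (R : realType) (k : nat) (M : 'M[R]_k) (theta : R)
  (i : 'I_k) : 'M[R]_k :=
  \matrix_(a, b) (if b == i then theta else M a b).

Definition ctln_nondegenerate (R : realType) (n : nat) (W : 'M[R]_n) (theta : R)
  : Prop :=
  forall tau : {set 'I_n},
    \det (IW W tau) != 0 /\
    forall i : 'I_#|tau|, \det (cramer_mx (IW W tau) theta i) != 0.

Definition permitted (R : realType) (n : nat) (W : 'M[R]_n) (theta : R)
  (s : {set 'I_n}) : Prop :=
  forall a : 'I_#|s|,
    0 < (theta *: (invmx (IW W s) *m (const_mx 1 : 'cV[R]_#|s|))) a ord0.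

Definition stable_motif (R : realType) (n : nat) (W : 'M[R]_n) (theta : R)
  (s : {set 'I_n}) : Prop :=
  permitted W theta s /\
  forall z : R[i],
    eigenvalue (map_mx (fun x : R => (x%:C)%C) (IW W s)) z -> 0 < Re z.

Definition clique (n : nat) (G : rel 'I_n) (s : {set 'I_n}) : Prop :=
  forall i j, i \in s -> j \in s -> i != j -> G i j.

Definition directed_clique (n : nat) (G : rel 'I_n) (s : {set 'I_n}) : Prop :=
  exists2 l : seq 'I_n, perm_eq l (enum s) & pairwise G l.

Definition contains_near_clique (n : nat) (G : rel 'I_n) (s : {set 'I_n})
  : Prop :=
  exists2 t : {set 'I_n}, t \subset s & (#|t| = #|s| - 1)%N /\ clique G t.

From HB Require Import structures.
From mathcomp Require Import all_boot all_order all_algebra.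
From mathcomp Require Import complex.
From mathcomp Require Import reals.
From mathcomp Require Import ring lra.
Set Implicit Arguments. Unset Strict Implicit. Unset Printing Implicit Defensive.
Import Order.TTheory GRing.Theory Num.Theory.
Local Open Scope ring_scope.

(* Write I - W_sigma = eps I + (1 - eps) J + (eps + delta) N, with J the all-ones
   matrix and N_ij = 1 exactly when i <> j and there is no edge j -> i.  For a
   clique N = 0, so theta (I - W_sigma)^-1 1 is a positive multiple of 1 and the
   spectrum is {eps, eps + (1 - eps) |sigma|}.
   Conversely, comparing two rows of (I - W_sigma) y = 1 for a positive y shows
   that a missing edge j -> i forces a missing edge l -> j for some l.  In a
   directed clique, let i be the last node with a missing input j -> i: then j
   also has a missing input, so j precedes i, whence j -> i after all.  If sigma
   is a clique plus one node k, every missing edge touches k and the rule says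
   that j -/-> k implies k -/-> j.  The left action of I - W_sigma then preserves
   span {e_k, 1, p}, p the indicator of the nodes not feeding k, and has there a
   negative eigenvalue eps - mu, with mu > eps a root of a cubic found by the
   intermediate value theorem; so sigma is not stable. *)

Lemma cubic_root_gt (R : rcfType) (eps g u p b c : R) :
  0 < eps < g -> 0 < u -> 1 <= p <= b -> b <= c ->
  exists2 mu, eps < mu &
    (mu + c * u) * (mu ^+ 2 - g ^+ 2 * p) + u * (mu - p * g) * (mu - g * b) = 0.
Proof.
move=> /andP[eps_gt0 lt_eps_g] u_gt0 /andP[p_ge1 le_pb] le_bc.
pose q : {poly R} := ('X + (c * u)%:P) * ('X ^+ 2 - (g ^+ 2 * p)%:P)
  + u%:P * ('X - (p * g)%:P) * ('X - (g * b)%:P).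
have qE x : q.[x] = (x + c * u) * (x ^+ 2 - g ^+ 2 * p)
                    + u * (x - p * g) * (x - g * b) by rewrite !hornerE.
have q_eps : q.[eps] < 0.
  pose D := g ^+ 2 * p - eps ^+ 2.
  have D_gt0 : 0 < D by rewrite /D; nra.
  have -> : q.[eps] = - (eps * D) - (c - b) * u * D
                      + u * eps * (b * (eps - g) + (eps - p * g)).
    by rewrite qE /D; ring.
  have epsD_gt0 : 0 < eps * D by exact: mulr_gt0.
  have cbuD_ge0 : 0 <= (c - b) * u * D by apply: mulr_ge0; [apply: mulr_ge0|]; lra.
  have rest_lt0 : u * eps * (b * (eps - g) + (eps - p * g)) < 0.
    by rewrite pmulr_rlt0 ?mulr_gt0 //; nra.
  lra.
pose B := eps + p * g + g * b.
have pg_ge0 : 0 <= p * g by apply: mulr_ge0; lra.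
have gb_ge0 : 0 <= g * b by apply: mulr_ge0; lra.
have le_eps_B : eps <= B by rewrite /B; lra.
have q_B : 0 <= q.[B].
  have pg_le_B : (p * g) ^+ 2 <= B ^+ 2 by rewrite ler_sqr ?nnegrE /B; lra.
  have gp_le_pg : g ^+ 2 * p <= (p * g) ^+ 2.
    by rewrite exprMn mulrC ler_wpM2r ?sqr_ge0 //; nra.
  have cu_ge0 : 0 <= c * u by apply: mulr_ge0; lra.
  rewrite qE.
  apply: addr_ge0; apply: mulr_ge0; rewrite ?subr_ge0; try lra.
    by apply: mulr_ge0; rewrite ?subr_ge0 /B; lra.
  by rewrite /B; lra.
have q_sign : q.[eps] <= 0 <= q.[B] by rewrite (ltW q_eps) q_B.
have [mu /andP[le_eps_mu _] /rootP q_mu] := poly_ivt le_eps_B q_sign.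
exists mu; last by rewrite -qE.
by rewrite lt_neqAle le_eps_mu andbT; apply: contraTneq q_eps => ->; rewrite q_mu ltxx.
Qed.

Lemma eigenvalue_scalar_add_const (F : fieldType) (m : nat) (a c z : F) :
  eigenvalue (a%:M + const_mx c : 'M_m) z -> z = a \/ z = a + m%:R * c.
Proof.
case/eigenvalueP=> v vM v_neq0.
pose S := \sum_i v ord0 i.
have vE j : (z - a) * v ord0 j = c * S.
  have := congr1 (fun A : 'rV_m => A ord0 j) vM.
  rewrite mulmxDr mul_mx_scalar !mxE (eq_bigr (fun i => v ord0 i * c)).
    by rewrite -mulr_suml mulrBl => <-; rewrite addrAC subrr add0r mulrC.
  by move=> i _; rewrite mxE.
have [->|z_neq_a] := eqVneq z a; [by left | right].
have S_neq0 : S != 0.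
  apply: contraNneq v_neq0 => S0; apply/eqP/rowP => j; rewrite mxE.
  apply/eqP; have := vE j; rewrite S0 mulr0 => /eqP.
  by rewrite mulf_eq0 subr_eq0 (negbTE z_neq_a).
have : (z - a) * S = m%:R * c * S.
  rewrite mulr_sumr (eq_bigr (fun=> c * S)); last by move=> j _; exact: vE.
  by rewrite sumr_const card_ord mulr_natl mulrnAl.
move/(mulIf S_neq0)/eqP; rewrite subr_eq addrC => /eqP //.
Qed.

Lemma positive_solution_iff (R : realFieldType) (m : nat) (A : 'M[R]_m) (theta : R) :
  0 < theta -> A \in unitmx ->
  (forall a, 0 < (theta *: (invmx A *m (const_mx 1 : 'cV_m))) a ord0) <->
  exists2 y : 'cV_m, (forall a, 0 < y a ord0) & A *m y = const_mx 1.
Proof.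
move=> theta_gt0 A_unit; split=> [y_gt0 | [y y_gt0 Ay]].
  exists (invmx A *m const_mx 1); last by rewrite mulKVmx.
  by move=> a; have := y_gt0 a; rewrite mxE pmulr_rgt0.
by move=> a; rewrite -Ay mulKmx // mxE pmulr_rgt0.
Qed.

Lemma Re_realC_gt0 (R : rcfType) (x : R) : (0 < 'Re (x%:C)%C) = (0 < x).
Proof. by rewrite -complexRe ltcR. Qed.

Section IminusCTLN.
Variables (R : realType) (m : nat) (H : rel 'I_m) (eps delta : R).
Hypotheses (eps_gt0 : 0 < eps) (delta_gt0 : 0 < delta) (eps_lt1 : eps < 1).

Local Notation M := (1%:M - ctln H eps delta).

Definition noinput (i j : 'I_m) : bool := (i != j) && ~~ H j i.

Lemma IW_ctlnE i j :
  M i j = eps * (i == j)%:R + (1 - eps) + (eps + delta) * (noinput i j)%:R.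
Proof.
rewrite /noinput !mxE; have [->|ij] /= := eqVneq i j; first by rewrite subr0; ring.
by case: (H j i) => /=; ring.
Qed.

Lemma mulmx_IW_ctln_col (y : 'cV[R]_m) i :
  (M *m y) i ord0 = eps * y i ord0 + (1 - eps) * \sum_j y j ord0
                    + (eps + delta) * \sum_j (noinput i j)%:R * y j ord0.
Proof.
rewrite mxE (eq_bigr (fun j => eps * ((i == j)%:R * y j ord0) + (1 - eps) * y j ord0
    + (eps + delta) * ((noinput i j)%:R * y j ord0))) => [|j _]; last first.
  by rewrite IW_ctlnE; ring.
rewrite !big_split /= -!mulr_sumr (bigD1 i) //= eqxx mul1r big1 ?addr0 // => j.
by rewrite eq_sym => /negbTE->; rewrite mul0r.
Qed.

Lemma mulmx_IW_ctln_row (v : 'rV[R]_m) j :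
  (v *m M) ord0 j = eps * v ord0 j + (1 - eps) * \sum_i v ord0 i
                    + (eps + delta) * \sum_i v ord0 i * (noinput i j)%:R.
Proof.
rewrite mxE (eq_bigr (fun i => eps * (v ord0 i * (i == j)%:R) + (1 - eps) * v ord0 i
    + (eps + delta) * (v ord0 i * (noinput i j)%:R))) => [|i _]; last first.
  by rewrite IW_ctlnE; ring.
rewrite !big_split /= -!mulr_sumr (bigD1 j) //= eqxx mulr1 big1 ?addr0 // => i.
by move=> /negbTE->; rewrite mulr0.
Qed.

Lemma IW_ctln_clique : clique H setT -> M = eps%:M + const_mx (1 - eps).
Proof.
move=> cl; apply/matrixP=> i j; rewrite IW_ctlnE !mxE /noinput.
have [->|ij] /= := eqVneq i j; first by rewrite mulr1n; ring.
by rewrite cl ?inE 1?eq_sym //=; ring.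
Qed.

Lemma clique_positive_solution :
  clique H setT -> exists2 y : 'cV_m, (forall i, 0 < y i ord0) & M *m y = const_mx 1.
Proof.
move=> /IW_ctln_clique->.
have c_gt0 : 0 < eps + m%:R * (1 - eps).
  by rewrite ltr_wpDr // mulr_ge0 ?ler0n ?subr_ge0 ?ltW.
exists (const_mx (eps + m%:R * (1 - eps))^-1) => [i|]; first by rewrite mxE invr_gt0.
apply/matrixP=> i j; rewrite mulmxDl mul_scalar_mx !mxE.
under eq_bigr do rewrite !mxE.
rewrite sumr_const card_ord -mulr_natl.
by field; rewrite gt_eqF.
Qed.

Lemma clique_eigenvalue_Re_gt0 : clique H setT ->
  forall z, eigenvalue (map_mx (fun x : R => (x%:C)%C) M) z -> 0 < 'Re z.
Proof.
move=> /IW_ctln_clique-> z.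
rewrite map_mxD map_scalar_mx map_const_mx.
case/eigenvalue_scalar_add_const=> ->; first by rewrite Re_realC_gt0.
rewrite -(rmorph_nat (real_complex R)) -!rmorphM -rmorphD Re_realC_gt0.
by rewrite ltr_wpDr // mulr_ge0 ?ler0n ?subr_ge0 ?ltW.
Qed.

Section NearClique.
Variable k : 'I_m.
Hypotheses (clique_off_k : clique H [set~ k])
  (noinput_k_sym : forall j, noinput k j -> noinput j k)
  (noinput_k : exists j, noinput k j).

Let p j : R := (noinput k j)%:R.
Let b i : R := (noinput i k)%:R.
Let e i : R := (i != k)%:R.

Lemma noinput_near_clique i j :
  (noinput i j)%:R = (i == k)%:R * p j + (j == k)%:R * b i.
Proof.
rewrite /p /b; have [->|ik] := eqVneq i k; have [->|jk] := eqVneq j k;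
  rewrite /= ?mul0r ?mul1r ?add0r ?addr0 //.
- by rewrite /noinput eqxx addr0.
- rewrite /noinput; have [//|ij] /= := eqVneq i j.
  by rewrite clique_off_k ?inE // eq_sym.
Qed.

Lemma mulmx_IW_near_clique (v : 'rV[R]_m) j :
  (v *m M) ord0 j = eps * v ord0 j + (1 - eps) * \sum_i v ord0 i
    + (eps + delta) * (v ord0 k * p j + (j == k)%:R * \sum_i v ord0 i * b i).
Proof.
rewrite mulmx_IW_ctln_row; congr (_ + _ * _).
under eq_bigr do rewrite noinput_near_clique mulrDr.
rewrite big_split /= (bigD1 k) //= eqxx mul1r big1 ?addr0 => [|i /negbTE->]; last first.
  by rewrite mul0r mulr0.
by rewrite mulr_sumr; congr (_ + _); apply: eq_bigr => i _; rewrite mulrCA.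
Qed.

Lemma near_clique_sum_bounds :
  1 <= \sum_j p j <= \sum_i b i /\ \sum_i b i <= \sum_i e i.
Proof.
have [j0 kj0] := noinput_k.
split; [apply/andP; split|].
- by rewrite (bigD1 j0) //= {1}/p kj0 lerDl sumr_ge0.
- by apply: ler_sum => i _; rewrite /p /b; case: (noinput k i) (@noinput_k_sym i) => // ->.
- apply: ler_sum => i _; rewrite /b /e; have [->|] := eqVneq i k; first by rewrite /noinput eqxx.
  by case: noinput.
Qed.

Lemma near_clique_eigenvalue_lt0 : exists2 lambda, lambda < 0 & eigenvalue M lambda.
Proof.
have [P_range B_le_C] := near_clique_sum_bounds.
set P := \sum_j p j in P_range; set B := \sum_i b i in P_range B_le_C.
set C := \sum_i e i in B_le_C; set g := eps + delta; set u := 1 - eps.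
have eps_range : 0 < eps < g by rewrite eps_gt0 /= ltrDl.
have u_gt0 : 0 < u by rewrite subr_gt0.
have [mu eps_lt_mu cubic] := cubic_root_gt eps_range u_gt0 P_range B_le_C.
(* v = w e_k + T (1 - e_k) + d p; the coefficients of 1 - e_k and p in
   v M = (eps - mu) v hold identically, that of e_k is the cubic. *)
pose w := mu * (mu + C * u).
pose T := - (u * (mu - P * g)).
pose d := - (g * (mu + C * u)).
pose v : 'rV_m := \row_i ((i == k)%:R * w + e i * T + p i * d).
have p_k : p k = 0 by rewrite /p /noinput eqxx.
have b_k : b k = 0 by rewrite /b /noinput eqxx.
have v_k : v ord0 k = w by rewrite mxE eqxx /e eqxx p_k /=; ring.
have sum_v : \sum_i v ord0 i = w + C * T + P * d.
  under eq_bigr do rewrite mxE.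
  rewrite !big_split /= -!mulr_suml (bigD1 k) //= eqxx big1 ?addr0 ?mul1r //.
  by move=> i /negbTE->.
have sum_vb : \sum_i v ord0 i * b i = T * B + d * P.
  rewrite mulr_sumr [d * _]mulr_sumr -big_split /=; apply: eq_bigr => i _.
  rewrite mxE /e /p /b; have [->|ik] /= := eqVneq i k; first by rewrite /noinput eqxx /=; ring.
  by case: (noinput k i) (@noinput_k_sym i) => [->|_] //=; ring.
have vM : v *m M = (eps - mu) *: v.
  apply/rowP=> j; rewrite mulmx_IW_near_clique sum_v sum_vb v_k !mxE.
  have [->|jk] := eqVneq j k.
    rewrite p_k /e eqxx /= -/g -/u; apply/eqP; rewrite -subr_eq0 -cubic; apply/eqP.
    by rewrite /w /T /d; ring.
  by rewrite /e jk /= -/g -/u /w /T /d; ring.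
exists (eps - mu); first by rewrite subr_lt0.
have w_gt0 : 0 < w.
  have Cu_ge0 : 0 <= C * u by rewrite mulr_ge0 ?sumr_ge0 ?ltW.
  by apply: mulr_gt0; lra.
apply/eigenvalueP; exists v => //; apply/eqP=> v0.
by move: w_gt0; rewrite -v_k v0 mxE ltxx.
Qed.

End NearClique.

Section PositiveSolution.
Variable y : 'cV[R]_m.
Hypotheses (y_gt0 : forall i, 0 < y i ord0) (My1 : M *m y = const_mx 1).

Lemma noinput_step i j : noinput i j -> exists l, noinput j l.
Proof.
move=> ij; case: (pickP (noinput j)) => [l jl | j_fed]; first by exists l.
(* Row i minus row j of M y = 1 reads eps y_i + (eps + delta) sum_l N_il y_l = eps y_j,
   but the sum contains y_j. *)
have := mulmx_IW_ctln_col y i; have := mulmx_IW_ctln_col y j.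
have -> : \sum_l (noinput j l)%:R * y l ord0 = 0.
  by apply: big1 => l _; rewrite j_fed mul0r.
rewrite My1 !mxE.
have : (eps + delta) * y j ord0 <= (eps + delta) * \sum_l (noinput i l)%:R * y l ord0.
  rewrite ler_pM2l ?addr_gt0 // (bigD1 j) //= ij mulr1n mul1r lerDl sumr_ge0 // => l _.
  by rewrite mulr_ge0 ?ler0n ?ltW.
have := mulr_gt0 eps_gt0 (y_gt0 i); have := mulr_gt0 delta_gt0 (y_gt0 j); lra.
Qed.

Lemma directed_clique_complete (pos : 'I_m -> nat) :
  injective pos -> (forall i j, (pos i < pos j)%N -> H i j) -> clique H setT.
Proof.
move=> pos_inj pos_edge a b _ _ ab; apply/negPn/negP=> not_ab.
pose missing := [pred i | [exists j, noinput i j]].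
have b_missing : missing b by apply/existsP; exists a; rewrite /noinput eq_sym ab.
have [i /existsP[j ij] pos_max] := arg_maxnP pos b_missing.
have [l jl] := noinput_step ij.
have j_missing : missing j by apply/existsP; exists l.
move: (pos_max j j_missing); rewrite /= leq_eqVlt => /orP[/eqP/pos_inj ji | /pos_edge ji].
  by move: ij; rewrite /noinput ji eqxx.
by move: ij; rewrite /noinput ji andbF.
Qed.

Lemma near_clique_stable_complete k : clique H [set~ k] ->
  (forall z, eigenvalue (map_mx (fun x : R => (x%:C)%C) M) z -> 0 < 'Re z) ->
  clique H setT.
Proof.
move=> clique_k stable a b _ _ ab; apply/negPn/negP=> not_ab.
have noinput_off_k i j : i != k -> j != k -> noinput i j = false.
  move=> ik jk; rewrite /noinput; have [//|ij] /= := eqVneq i j.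
  by rewrite clique_k ?inE // eq_sym.
have noinput_k_sym j : noinput k j -> noinput j k.
  move=> kj; have [l jl] := noinput_step kj.
  have jk : j != k by move: kj => /andP[]; rewrite eq_sym.
  have [<- //|lk] := eqVneq l k.
  by rewrite noinput_off_k in jl.
have noinput_k : exists j, noinput k j.
  have ba : noinput b a by rewrite /noinput eq_sym ab.
  have [<-|bk] := eqVneq b k; first by exists a.
  have [ak|ak] := eqVneq a k; last by rewrite noinput_off_k in ba.
  by rewrite ak in ba; exact: noinput_step ba.
have [lambda lambda_lt0] := near_clique_eigenvalue_lt0 clique_k noinput_k_sym noinput_k.
rewrite -(eigenvalue_map (real_complex R)) => /stable.
by rewrite Re_realC_gt0 ltNge ltW.
Qed.

End PositiveSolution.

End IminusCTLN.

Definition induced (n : nat) (G : rel 'I_n) (s : {set 'I_n}) : rel 'I_#|s| :=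
  fun a b => G (enum_val a) (enum_val b).
Arguments induced {n} G s.

Section InducedSubgraph.
Variables (n : nat) (G : rel 'I_n) (s : {set 'I_n}).

Lemma IW_ctln_induced (R : realType) (eps delta : R) :
  IW (ctln G eps delta) s = 1%:M - ctln (induced G s) eps delta.
Proof. by apply/matrixP=> a b; rewrite !mxE (inj_eq enum_val_inj). Qed.

Lemma clique_induced : clique G s <-> clique (induced G s) setT.
Proof.
split=> [cl a b _ _ ab | cl i j si sj ij].
  by apply: cl; rewrite ?enum_valP ?(inj_eq enum_val_inj).
rewrite -(enum_rankK_in si si) -(enum_rankK_in si sj); apply: cl; rewrite ?inE //.
by apply: contra ij => /eqP/(congr1 enum_val); rewrite !enum_rankK_in // => ->.
Qed.

Lemma directed_clique_induced : directed_clique G s ->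
  exists2 pos : 'I_#|s| -> nat, injective pos &
    forall a b, (pos a < pos b)%N -> induced G s a b.
Proof.
case=> l perm_l sorted_l.
have l_val (a : 'I_#|s|) : enum_val a \in l.
  by rewrite (perm_mem perm_l) mem_enum enum_valP.
exists (fun a => index (enum_val a) l) => [a b eq_ab | a b lt_ab].
  by apply: enum_val_inj; rewrite -(nth_index (enum_val a) (l_val a)) eq_ab nth_index.
rewrite /induced -(nth_index (enum_val a) (l_val a)) -(nth_index (enum_val a) (l_val b)).
have /(pairwiseP (enum_val a)) l_edge := sorted_l.
by apply: l_edge; rewrite ?unfold_in /= ?index_mem.
Qed.

Lemma near_clique_induced (a : 'I_#|s|) : contains_near_clique G s ->
  exists k, clique (induced G s) [set~ k].
Proof.
case=> t sub_ts [card_t clique_t].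
have s_gt0 : (0 < #|s|)%N by apply: leq_ltn_trans (ltn_ord a).
have /properP[_ [k ks kt]] : t \proper s by rewrite properEcard sub_ts card_t ltn_subrL.
have t_eq : t = s :\ k.
  by apply/eqP; rewrite eqEcard subsetD1 sub_ts kt card_t (cardsD1 k s) ks /= subn1.
have in_t (c : 'I_#|s|) : c != enum_rank_in ks k -> enum_val c \in t.
  rewrite t_eq !inE enum_valP andbT; apply: contra => /eqP ck.
  by apply/eqP/enum_val_inj; rewrite ck enum_rankK_in.
exists (enum_rank_in ks k) => i j; rewrite !inE => ik jk ij.
by apply: clique_t; rewrite ?in_t ?(inj_eq enum_val_inj).
Qed.

End InducedSubgraph.

Theorem theorem4 (R : realType) (n : nat) (G : rel 'I_n) (s : {set 'I_n})
  (eps delta theta : R) :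
  simple_digraph G ->
  legal_params eps delta ->
  0 < theta ->
  ctln_nondegenerate (ctln G eps delta) theta ->
  directed_clique G s \/ contains_near_clique G s ->
  (stable_motif (ctln G eps delta) theta s <-> clique G s).
Proof.
move=> _ [delta_gt0 [eps_gt0 eps_lt]] theta_gt0 nondeg directed_or_near.
have eps_lt1 : eps < 1.
  by apply: lt_trans eps_lt _; rewrite ltr_pdivrMr ?mul1r ?ltrDl // addr_gt0.
have IW_unit : IW (ctln G eps delta) s \in unitmx.
  by rewrite unitmxE unitfE; case: (nondeg s).
rewrite /stable_motif /permitted positive_solution_iff // IW_ctln_induced clique_induced.
split=> [[[y y_gt0 My1] stable] | clique_s]; last first.
  by split; [apply: clique_positive_solution | apply: clique_eigenvalue_Re_gt0].
case: directed_or_near => [/directed_clique_induced[pos pos_inj pos_edge] | near].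
  exact (directed_clique_complete eps_gt0 delta_gt0 y_gt0 My1 pos_inj pos_edge).
move=> a b a_s b_s ab; have [k clique_k] := near_clique_induced a near.
exact (near_clique_stable_complete eps_gt0 delta_gt0 eps_lt1 y_gt0 My1 clique_k stable
  a_s b_s ab).
Qed.
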